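(* As $s\to 1^+$ (real $s$), $$\lim_{s\to1^+}(s-1)\prod_{p\equiv 5 \pmod 8}\left(1-\frac{1}{p^s}\right)^{-4}=\frac{1}{2\ln(1+\sqrt2)}\prod_{p\equiv 5\pmod 8}\left(1-\frac{1}{p^2}\right)^{-2},$$ where the products are over primes $p\equiv 5\pmod 8$. *)

From Stdlib Require Import Reals ZArith Znumtheory.
From Coquelicot Require Import Coquelicot.
Open Scope R_scope.

Definition prime5mod8 (n : nat) : bool :=
  if prime_dec (Z.of_nat n) then Nat.eqb (n mod 8) 5 else false.

Fixpoint prod_p5 (f : nat -> R) (N : nat) : R :=
  match N with
  | O => 1
  | S n => prod_p5 f n * (if prime5mod8 n then f n else 1)
  end.

Definition euler_factor (s : R) (p : nat) : R :=
  / (1 - Rpower (INR p) (- s)) ^ 4.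

Definition const_factor (p : nat) : R :=
  / (1 - / (INR p) ^ 2) ^ 2.

From Stdlib Require Import Reals ZArith Znumtheory Lia Lra ClassicalEpsilon.
From Coquelicot Require Import Coquelicot.
Open Scope R_scope.

(** Comparing Euler factors prime by prime (with [x = p^-s], a prime
    [p = 5 (mod 8)] contributes [(1 - x)^4 (1 + x)^2 = (1 - x)^2 (1 - x^2)^2],
    at the other primes both sides have the same factors) gives, for [s > 1],
      [F(s) L(s, chi_8) L(s, chi_m8) = L(s, chi0) L(s, chi_m4) P(s)]
    with [P(s) = prod_{p = 5 (mod 8)} (1 - p^(-2s))^-2].  Each Euler product
    converges to its Dirichlet series because the partial product over the
    primes below [N] is the sum of [f(n)] over the [N]-smooth [n].
    As [s -> 1+], [(s - 1) L(s, chi0) -> 1/2] (compare the sum over odd [n]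
    with an integral), [P] is continuous, and the three non-principal
    [L]-functions are continuous with values [L(1, chi) = int_0^1 Q(x) / (1 - x^8) dx],
    [Q(x) = sum_r chi(r) x^(r - 1)]: [PI/4], [ln (1 + sqrt 2) / sqrt 2] and
    [PI / (2 sqrt 2)]. *)

Lemma sum_Sn_R (a : nat -> R) n : sum_n a (S n) = sum_n a n + a (S n).
Proof. exact (sum_Sn a n). Qed.

Lemma sum_n_m_shift (a : nat -> R) n j :
  sum_n_m a n (n + j) = sum_n (fun r => a (n + r)%nat) j.
Proof.
  induction j as [|j IH].
  - rewrite Nat.add_0_r, sum_n_n, sum_O, Nat.add_0_r. reflexivity.
  - rewrite sum_Sn, <- IH, Nat.add_succ_r.
    rewrite (sum_n_m_Chasles _ n (n + j) (S (n + j))), sum_n_n by lia.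
    reflexivity.
Qed.

Lemma sum_n_blocks (h : nat -> R) (m K : nat) : (0 < m)%nat ->
  sum_n h (m * K + (m - 1)) =
  sum_n (fun k => sum_n (fun r => h (m * k + r)%nat) (m - 1)) K.
Proof.
  intros Hm. induction K as [|K IH].
  - rewrite sum_O, Nat.mul_0_r. apply sum_n_ext. intros r. reflexivity.
  - rewrite sum_Sn, <- IH. unfold sum_n at 1.
    rewrite (sum_n_m_Chasles _ 0 (m * K + (m - 1)) (m * S K + (m - 1))) by lia.
    replace (S (m * K + (m - 1))) with (m * S K)%nat by lia.
    rewrite sum_n_m_shift. reflexivity.
Qed.

Lemma is_series_blocks (h : nat -> R) (m : nat) (l : R) : (0 < m)%nat ->
  is_series h l ->
  is_series (fun k => sum_n (fun r => h (m * k + r)%nat) (m - 1)) l.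
Proof.
  intros Hm Hh. unfold is_series.
  eapply filterlim_ext; [intros K; apply sum_n_blocks, Hm|].
  apply (is_lim_seq_subseq (sum_n h) l (fun K => (m * K + (m - 1))%nat)); [|exact Hh].
  intros P [N HN]. exists N. intros n Hn. apply HN. nia.
Qed.

Lemma is_lim_seq_Series_tail (g : nat -> R) : ex_series g ->
  is_lim_seq (fun N => Series (fun k => g (N + k)%nat)) 0.
Proof.
  intros Hg. apply is_lim_seq_incr_1.
  apply (is_lim_seq_ext (fun N => Series g - sum_n g N)).
  { intros N. rewrite (Series_incr_n g (S N)), sum_n_Reals by (lia || exact Hg).
    simpl. ring. }
  replace (Finite 0) with (Rbar_minus (Series g) (Series g)) by (simpl; f_equal; ring).
  apply is_lim_seq_minus'; [apply is_lim_seq_const | apply (Series_correct _ Hg)].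
Qed.

Lemma ex_series_Rabs_le (a b : nat -> R) :
  (forall n, Rabs (a n) <= b n) -> ex_series b -> ex_series a.
Proof. intros Hab Hb. exact (ex_series_le a b Hab Hb). Qed.

Lemma Rabs_Series_le (a b : nat -> R) : (forall n, Rabs (a n) <= b n) -> ex_series b ->
  Rabs (Series a) <= Series b.
Proof.
  intros Hab Hb.
  eapply Rle_trans; [apply Series_Rabs|].
  - apply (ex_series_Rabs_le _ b); [|exact Hb]. intros n. rewrite Rabs_Rabsolu. apply Hab.
  - apply Series_le; [|exact Hb]. intros n. split; [apply Rabs_pos | apply Hab].
Qed.

(** * Euler products *)

Definition primeb (n : nat) : bool := if prime_dec (Z.of_nat n) then true else false.

Fixpoint prod_primes (f : nat -> R) (N : nat) : R :=
  match N with
  | O => 1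
  | S n => prod_primes f n * (if primeb n then f n else 1)
  end.

Definition smooth (N n : nat) : Prop :=
  forall q : nat, prime (Z.of_nat q) -> (Z.of_nat q | Z.of_nat n)%Z -> (q < N)%nat.

Definition smooth_part (f : nat -> R) (N n : nat) : R :=
  if excluded_middle_informative (smooth N n) then f n else 0.

Lemma prime_nat_ge_2 q : prime (Z.of_nat q) -> (2 <= q)%nat.
Proof. intros H. apply prime_ge_2 in H. lia. Qed.

Lemma primeb_ge_2 p : primeb p = true -> (2 <= p)%nat.
Proof.
  unfold primeb. destruct prime_dec as [H|]; [|discriminate]. now intros _; apply prime_nat_ge_2.
Qed.

Lemma exists_prime_divisor (n : nat) : (2 <= n)%nat ->
  exists q : nat, prime (Z.of_nat q) /\ (Z.of_nat q | Z.of_nat n)%Z.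
Proof.
  induction n as [n IH] using lt_wf_ind. intros Hn.
  destruct (prime_dec (Z.of_nat n)) as [Hp|Hp].
  - exists n. split; [exact Hp | apply Z.divide_refl].
  - destruct (not_prime_divide (Z.of_nat n)) as [d [Hd1 Hd2]]; [lia | exact Hp |].
    destruct (IH (Z.to_nat d)) as [q [Hq1 Hq2]]; [lia | lia |].
    exists q. split; [exact Hq1|].
    eapply Z.divide_trans; [exact Hq2|]. rewrite Z2Nat.id; [exact Hd2 | lia].
Qed.

Lemma smooth_0 n : smooth 0 n -> n = 1%nat.
Proof.
  intros H. destruct n as [|[|n]].
  - assert (H2 : (2 < 0)%nat) by (apply (H 2%nat prime_2); exists 0%Z; reflexivity). lia.
  - reflexivity.
  - destruct (exists_prime_divisor (S (S n))) as [q [Hq1 Hq2]]; [lia|].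
    specialize (H q Hq1 Hq2). lia.
Qed.

Lemma smooth_of_lt N n : (1 <= n)%nat -> (n < N)%nat -> smooth N n.
Proof. intros H1 H2 q Hq Hd. apply Z.divide_pos_le in Hd; lia. Qed.

Lemma smooth_S_not_prime N n : ~ prime (Z.of_nat N) -> smooth (S N) n <-> smooth N n.
Proof.
  intros HN. split; intros H q Hq Hd; specialize (H q Hq Hd).
  - destruct (Nat.eq_dec q N); [subst; contradiction | lia].
  - lia.
Qed.

Lemma smooth_S_not_dvd p n : ~ (Z.of_nat p | Z.of_nat n)%Z -> smooth (S p) n <-> smooth p n.
Proof.
  intros Hn. split; intros H q Hq Hd; specialize (H q Hq Hd).
  - destruct (Nat.eq_dec q p); [subst; contradiction | lia].
  - lia.
Qed.

Lemma not_smooth_dvd p n : prime (Z.of_nat p) -> (Z.of_nat p | Z.of_nat n)%Z -> ~ smooth p n.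
Proof. intros Hp Hn H. specialize (H p Hp Hn). lia. Qed.

Lemma smooth_S_mul p m : prime (Z.of_nat p) -> smooth (S p) (p * m) <-> smooth (S p) m.
Proof.
  intros Hp. split; intros H q Hq Hd.
  - apply H; [exact Hq|]. rewrite Nat2Z.inj_mul. apply Z.divide_mul_r, Hd.
  - rewrite Nat2Z.inj_mul in Hd. destruct (prime_mult _ Hq _ _ Hd) as [Hd'|Hd'].
    + assert (Z.of_nat q = Z.of_nat p) by (apply prime_div_prime; assumption). lia.
    + apply H; assumption.
Qed.

Lemma smooth_part_ext f N N' n : (smooth N n <-> smooth N' n) ->
  smooth_part f N n = smooth_part f N' n.
Proof.
  intros H. unfold smooth_part.
  destruct excluded_middle_informative as [a|a], excluded_middle_informative as [b|b];
    auto; exfalso; [apply b, H, a | apply a, H, b].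
Qed.

Section EulerProduct.

Variables f g : nat -> R.
Hypothesis f_mul : forall m n, f (m * n)%nat = f m * f n.
Hypothesis f_1 : f 1%nat = 1.
Hypothesis f_0 : f 0%nat = 0.
Hypothesis f_le_g : forall n, Rabs (f n) <= g n.
Hypothesis ex_series_g : ex_series g.
Hypothesis f_prime_neq_1 : forall p, prime (Z.of_nat p) -> f p <> 1.

Lemma g_ge_0 n : 0 <= g n.
Proof. eapply Rle_trans; [apply Rabs_pos | apply f_le_g]. Qed.

Lemma Rabs_smooth_part_le N n : Rabs (smooth_part f N n) <= g n.
Proof.
  unfold smooth_part. destruct excluded_middle_informative; [apply f_le_g|].
  rewrite Rabs_R0. apply g_ge_0.
Qed.

Lemma ex_series_smooth_part N : ex_series (smooth_part f N).
Proof. exact (ex_series_Rabs_le _ g (Rabs_smooth_part_le N) ex_series_g). Qed.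

Lemma Series_smooth_part_0 : Series (smooth_part f 0) = 1.
Proof.
  assert (Hsp : forall n, smooth_part f 0 n = if Nat.eqb n 1 then 1 else 0).
  { intros n. unfold smooth_part. destruct (Nat.eqb_spec n 1) as [->|Hn].
    - destruct excluded_middle_informative as [_|Hs]; [exact f_1|].
      exfalso. apply Hs. intros q Hq Hd. apply prime_nat_ge_2 in Hq. apply Z.divide_pos_le in Hd; lia.
    - destruct excluded_middle_informative as [Hs|_]; [|reflexivity].
      apply smooth_0 in Hs. contradiction. }
  assert (Hex := ex_series_smooth_part 0).
  rewrite Series_incr_1, Series_incr_1 by (exact Hex || now apply (ex_series_incr_1 (smooth_part f 0))).
  rewrite !Hsp, (Series_ext _ (fun n => 0 * 0)) by (intros n; rewrite Hsp; simpl; ring).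
  rewrite Series_scal_l. simpl. ring.
Qed.

Lemma sum_n_eq_first (a : nat -> R) j :
  (forall r, (0 < r <= j)%nat -> a r = 0) -> sum_n a j = a 0%nat :> R.
Proof.
  induction j as [|j IH]; intros H.
  - apply sum_O.
  - rewrite sum_Sn_R, IH, (H (S j)) by (lia || (intros; apply H; lia)). ring.
Qed.

Lemma Series_smooth_part_multiples p : prime (Z.of_nat p) ->
  Series (fun n => if Zdivide_dec (Z.of_nat p) (Z.of_nat n) then smooth_part f (S p) n else 0)
  = f p * Series (smooth_part f (S p)).
Proof.
  intros Hp. set (A := fun n => if Zdivide_dec _ _ then _ else _).
  assert (HexA : ex_series A).
  { apply (ex_series_Rabs_le _ g); [|exact ex_series_g]. intros n. unfold A.
    destruct Zdivide_dec; [apply Rabs_smooth_part_le | rewrite Rabs_R0; apply g_ge_0]. }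
  assert (Hp2 := prime_nat_ge_2 _ Hp).
  rewrite <- Series_scal_l. symmetry. apply is_series_unique.
  eapply is_series_ext; [|apply (is_series_blocks A p _ ltac:(lia) (Series_correct _ HexA))].
  intros k. cbv beta. rewrite sum_n_eq_first.
  - unfold A. rewrite Nat.add_0_r. destruct Zdivide_dec as [_|Hn].
    + unfold smooth_part. rewrite f_mul. pose proof (smooth_S_mul p k Hp).
      destruct excluded_middle_informative, excluded_middle_informative; cbv iota;
        [reflexivity | exfalso; tauto | exfalso; tauto | symmetry; apply Rmult_0_r].
    + exfalso. apply Hn. rewrite Nat2Z.inj_mul. apply Z.divide_mul_l, Z.divide_refl.
  - intros r Hr. unfold A. destruct Zdivide_dec as [Hdv|]; [|reflexivity].
    exfalso. rewrite Nat2Z.inj_add, Nat2Z.inj_mul in Hdv.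
    apply Z.divide_add_cancel_r in Hdv; [|apply Z.divide_mul_l, Z.divide_refl].
    apply Z.divide_pos_le in Hdv; lia.
Qed.

(** With [S_N := Series (smooth_part f N)], the terms divisible by the new
    prime [p] add up to [f(p) S_{p+1}], so [S_{p+1} = f(p) S_{p+1} + S_p]. *)
Lemma Series_smooth_part_S N :
  Series (smooth_part f (S N)) = Series (smooth_part f N) * (if primeb N then / (1 - f N) else 1).
Proof.
  unfold primeb. destruct (prime_dec (Z.of_nat N)) as [Hp|Hp].
  2:{ rewrite Rmult_1_r. apply Series_ext. intros n. now apply smooth_part_ext, smooth_S_not_prime. }
  set (A := fun n => if Zdivide_dec (Z.of_nat N) (Z.of_nat n) then smooth_part f (S N) n else 0).
  assert (HA : forall n, smooth_part f (S N) n = A n + smooth_part f N n).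
  { intros n. unfold A. destruct Zdivide_dec as [Hdv|Hdv].
    - unfold smooth_part at 3. destruct excluded_middle_informative as [Hs|_]; [|ring].
      exfalso. exact (not_smooth_dvd N n Hp Hdv Hs).
    - rewrite Rplus_0_l. now apply smooth_part_ext, smooth_S_not_dvd. }
  assert (HexA : ex_series A).
  { apply (ex_series_Rabs_le _ g); [|exact ex_series_g]. intros n. unfold A.
    destruct Zdivide_dec; [apply Rabs_smooth_part_le | rewrite Rabs_R0; apply g_ge_0]. }
  assert (E : Series (smooth_part f (S N)) = f N * Series (smooth_part f (S N)) + Series (smooth_part f N)).
  { rewrite <- (Series_smooth_part_multiples N Hp). fold A.
    rewrite <- Series_plus by (exact HexA || apply ex_series_smooth_part).
    apply Series_ext, HA. }
  assert (Hf : 1 - f N <> 0) by (intros Hc; apply (f_prime_neq_1 N Hp); lra).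
  apply (Rmult_eq_reg_l (1 - f N)); [|exact Hf]. field_simplify; [lra | exact Hf].
Qed.

Lemma prod_primes_Series_smooth_part N :
  prod_primes (fun p => / (1 - f p)) N = Series (smooth_part f N).
Proof.
  induction N as [|N IH]; simpl.
  - symmetry. apply Series_smooth_part_0.
  - rewrite IH. symmetry. apply Series_smooth_part_S.
Qed.

Lemma Rabs_Series_sub_smooth_part N :
  Rabs (Series f - Series (smooth_part f N)) <= Series (fun k => g (N + k)%nat).
Proof.
  set (b := fun n => if Nat.ltb n N then 0 else g n).
  assert (Hb : forall n, Rabs (f n - smooth_part f N n) <= b n).
  { intros n. unfold b, smooth_part. destruct (Nat.ltb_spec n N), excluded_middle_informative as [Hs|Hs].
    - rewrite Rminus_diag, Rabs_R0. lra.
    - destruct n as [|n]; [rewrite f_0, Rminus_0_r, Rabs_R0; lra|].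
      exfalso. apply Hs, smooth_of_lt; lia.
    - rewrite Rminus_diag, Rabs_R0. apply g_ge_0.
    - rewrite Rminus_0_r. apply f_le_g. }
  assert (Hexb : ex_series b).
  { apply (ex_series_Rabs_le _ g); [|exact ex_series_g]. intros n. unfold b.
    destruct Nat.ltb; [rewrite Rabs_R0 | rewrite Rabs_pos_eq by apply g_ge_0]; apply g_ge_0 || lra. }
  rewrite <- Series_minus.
  2:{ exact (ex_series_Rabs_le _ g f_le_g ex_series_g). }
  2:{ apply ex_series_smooth_part. }
  eapply Rle_trans; [apply (Rabs_Series_le _ b Hb Hexb)|].
  rewrite (Series_incr_n_aux b N).
  - right. apply Series_ext. intros k. unfold b. destruct (Nat.ltb_spec (N + k) N); [lia | reflexivity].
  - intros k Hk. unfold b. destruct (Nat.ltb_spec k N); [reflexivity | lia].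
Qed.

Theorem euler_product :
  is_lim_seq (prod_primes (fun p => / (1 - f p))) (Series f).
Proof.
  apply (is_lim_seq_le_le (fun N => Series f - Series (fun k => g (N + k)%nat)) _
                          (fun N => Series f + Series (fun k => g (N + k)%nat))).
  - intros N. rewrite prod_primes_Series_smooth_part.
    pose proof (Rabs_Series_sub_smooth_part N) as H. apply Rabs_le_between' in H. lra.
  - replace (Finite (Series f)) with (Rbar_minus (Series f) 0) by (simpl; f_equal; ring).
    apply is_lim_seq_minus'; [apply is_lim_seq_const | now apply is_lim_seq_Series_tail].
  - replace (Finite (Series f)) with (Rbar_plus (Series f) 0) by (simpl; f_equal; ring).
    apply is_lim_seq_plus'; [apply is_lim_seq_const | now apply is_lim_seq_Series_tail].
Qed.

End EulerProduct.

(** * Dirichlet series *)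

Lemma ln_le_sub_1 t : 0 < t -> ln t <= t - 1.
Proof. intros Ht. pose proof (exp_ineq1_le (ln t)) as H. rewrite exp_ln in H; lra. Qed.

Lemma Rpower_1_l y : Rpower 1 y = 1.
Proof. unfold Rpower. rewrite ln_1, Rmult_0_r. apply exp_0. Qed.

Lemma Rpower_opp_lt_1 x s : 1 < x -> 0 < s -> Rpower x (- s) < 1.
Proof.
  intros Hx Hs. rewrite <- (Rpower_O x) by lra. apply Rpower_lt; lra.
Qed.

Lemma Rpower_opp_le_base a b s : 0 < a -> a <= b -> 0 <= s -> Rpower b (- s) <= Rpower a (- s).
Proof.
  intros Ha Hab Hs. rewrite !Rpower_Ropp.
  apply Rinv_le_contravar; [apply exp_pos | apply Rle_Rpower_l; lra].
Qed.

(** The mean value estimate for [t ^ -u] on [[a, b]], derived from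
    [1 - 1/t <= ln t <= t - 1]. *)
Lemma Rpower_opp_sub_bounds a b u : 0 < a -> a < b -> 0 < u ->
  u * (b - a) * Rpower b (- u - 1) <= Rpower a (- u) - Rpower b (- u) <=
  u * (b - a) * Rpower a (- u - 1).
Proof.
  intros Ha Hab Hu.
  assert (Hm1 : forall c y, 0 < c -> Rpower c (y - 1) = Rpower c y / c).
  { intros c y Hc. unfold Rminus. rewrite Rpower_plus, Rpower_Ropp, Rpower_1 by lra. reflexivity. }
  rewrite !Hm1 by lra.
  set (D := ln b - ln a).
  assert (HD1 : D <= (b - a) / a).
  { unfold D. rewrite <- ln_div by lra.
    eapply Rle_trans; [apply ln_le_sub_1, Rdiv_lt_0_compat; lra | right; field; lra]. }
  assert (HD2 : (b - a) / b <= D).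
  { pose proof (ln_le_sub_1 (a / b) ltac:(apply Rdiv_lt_0_compat; lra)) as H.
    unfold D. rewrite ln_div in H by lra. replace ((b - a) / b) with (- (a / b - 1)) by (field; lra). lra. }
  assert (Eb : Rpower b (- u) = Rpower a (- u) * exp (- u * D)).
  { unfold Rpower, D. rewrite <- exp_plus. f_equal. ring. }
  assert (Ea : Rpower a (- u) = Rpower b (- u) * exp (u * D)).
  { unfold Rpower, D. rewrite <- exp_plus. f_equal. ring. }
  pose proof (exp_ineq1_le (- u * D)). pose proof (exp_ineq1_le (u * D)).
  pose proof (exp_pos (- u * ln a)). pose proof (exp_pos (- u * ln b)).
  fold (Rpower a (- u)) (Rpower b (- u)) in *.
  assert (u * (b - a) / b <= u * D) by (unfold Rdiv; rewrite Rmult_assoc; apply Rmult_le_compat_l; lra).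
  assert (u * D <= u * (b - a) / a) by (unfold Rdiv; rewrite Rmult_assoc; apply Rmult_le_compat_l; lra).
  split.
  - rewrite Ea at 1.
    replace (u * (b - a) * (Rpower b (- u) / b)) with (Rpower b (- u) * (u * (b - a) / b)) by (field; lra).
    replace (Rpower b (- u) * exp (u * D) - Rpower b (- u)) with (Rpower b (- u) * (exp (u * D) - 1)) by ring.
    apply Rmult_le_compat_l; lra.
  - rewrite Eb at 1.
    replace (u * (b - a) * (Rpower a (- u) / a)) with (Rpower a (- u) * (u * (b - a) / a)) by (field; lra).
    replace (Rpower a (- u) - Rpower a (- u) * exp (- u * D)) with (Rpower a (- u) * (1 - exp (- u * D))) by ring.
    apply Rmult_le_compat_l; lra.
Qed.

Definition zeta_term (s : R) (n : nat) : R := if Nat.eqb n 0 then 0 else Rpower (INR n) (- s).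

Lemma zeta_term_ge_0 s n : 0 <= zeta_term s n.
Proof. unfold zeta_term. destruct Nat.eqb; [lra | left; apply exp_pos]. Qed.

Lemma zeta_term_S_le s n : 1 < s ->
  zeta_term s (S (S n)) <= (Rpower (INR (S n)) (1 - s) - Rpower (INR (S (S n))) (1 - s)) / (s - 1).
Proof.
  intros Hs.
  assert (Hn : 0 < INR (S n)) by (apply lt_0_INR; lia).
  assert (Hlt : INR (S n) < INR (S (S n))) by (apply lt_INR; lia).
  destruct (Rpower_opp_sub_bounds _ _ (s - 1) Hn Hlt ltac:(lra)) as [H _].
  replace (- (s - 1) - 1) with (- s) in H by ring.
  replace (- (s - 1)) with (1 - s) in H by ring.
  replace (INR (S (S n)) - INR (S n)) with 1 in H by (rewrite (S_INR (S n)); ring).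
  unfold zeta_term. simpl Nat.eqb. cbv iota.
  apply Rmult_le_reg_l with (s - 1); [lra|].
  replace ((s - 1) * ((Rpower (INR (S n)) (1 - s) - Rpower (INR (S (S n))) (1 - s)) / (s - 1)))
    with (Rpower (INR (S n)) (1 - s) - Rpower (INR (S (S n))) (1 - s)) by (field; lra).
  lra.
Qed.

Lemma sum_n_zeta_term_le s N : 1 < s ->
  sum_n (zeta_term s) (S N) <= 1 + (1 - Rpower (INR (S N)) (1 - s)) / (s - 1).
Proof.
  intros Hs. induction N as [|N IH].
  - rewrite sum_Sn_R, sum_O. unfold zeta_term. simpl. rewrite !Rpower_1_l.
    unfold Rdiv. lra.
  - rewrite sum_Sn_R.
    pose proof (zeta_term_S_le s N Hs). unfold Rdiv in *. simpl INR in *. lra.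
Qed.

Lemma ex_series_zeta_term s : 1 < s -> ex_series (zeta_term s).
Proof.
  intros Hs.
  assert (Hinv : 0 < / (s - 1)) by (apply Rinv_0_lt_compat; lra).
  destruct (ex_finite_lim_seq_incr (sum_n (zeta_term s)) (1 + / (s - 1))) as [l Hl].
  - intros n. rewrite sum_Sn_R. pose proof (zeta_term_ge_0 s (S n)). lra.
  - intros [|n].
    + rewrite sum_O. unfold zeta_term. simpl. lra.
    + eapply Rle_trans; [apply sum_n_zeta_term_le, Hs|]. unfold Rdiv.
      pose proof (exp_pos ((1 - s) * ln (INR (S n)))). fold (Rpower (INR (S n)) (1 - s)) in *.
      nra.
  - exists l. exact Hl.
Qed.

Definition chi8 (a1 a3 a5 a7 : R) (n : nat) : R :=
  match (n mod 8)%nat with 1%nat => a1 | 3%nat => a3 | 5%nat => a5 | 7%nat => a7 | _ => 0 end.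

(** The principal character modulo 8 and the Kronecker symbols
    [(-4/.)], [(8/.)], [(-8/.)]. *)
Definition chi0 := chi8 1 1 1 1.
Definition chi_m4 := chi8 1 (-1) 1 (-1).
Definition chi_8 := chi8 1 (-1) (-1) 1.
Definition chi_m8 := chi8 1 1 (-1) (-1).

Definition bounded_multiplicative (c : nat -> R) : Prop :=
  (forall m n, c (m * n)%nat = c m * c n) /\ c 1%nat = 1 /\ c 0%nat = 0 /\
  (forall n, Rabs (c n) <= 1).

Ltac case_mod8 n :=
  let H := fresh in
  assert (H := Nat.mod_upper_bound n 8 ltac:(lia));
  destruct (n mod 8)%nat as [|[|[|[|[|[|[|[|]]]]]]]]; try lia.

Ltac prove_bounded_multiplicative :=
  unfold chi0, chi_m4, chi_8, chi_m8; repeat split;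
  [ intros m n; unfold chi8; rewrite Nat.Div0.mul_mod; case_mod8 m; case_mod8 n; simpl; ring
  | intros n; unfold chi8; case_mod8 n;
    unfold Rabs; destruct Rcase_abs; lra ].

Lemma chi0_bounded_multiplicative : bounded_multiplicative chi0.
Proof. prove_bounded_multiplicative. Qed.
Lemma chi_m4_bounded_multiplicative : bounded_multiplicative chi_m4.
Proof. prove_bounded_multiplicative. Qed.
Lemma chi_8_bounded_multiplicative : bounded_multiplicative chi_8.
Proof. prove_bounded_multiplicative. Qed.
Lemma chi_m8_bounded_multiplicative : bounded_multiplicative chi_m8.
Proof. prove_bounded_multiplicative. Qed.

Definition dirichlet (c : nat -> R) (s : R) (n : nat) : R := c n * Rpower (INR n) (- s).

Definition Lfun (c : nat -> R) (s : R) : R := Series (dirichlet c s).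

Lemma Rabs_dirichlet_le c s n : c 0%nat = 0 -> (forall n, Rabs (c n) <= 1) ->
  Rabs (dirichlet c s n) <= zeta_term s n.
Proof.
  intros H0 Hb. unfold dirichlet, zeta_term. destruct (Nat.eqb_spec n 0) as [->|_].
  - rewrite H0, Rmult_0_l, Rabs_R0. lra.
  - pose proof (exp_pos (- s * ln (INR n))). fold (Rpower (INR n) (- s)) in *.
    rewrite Rabs_mult, (Rabs_pos_eq (Rpower _ _)) by lra.
    specialize (Hb n). nra.
Qed.

Lemma ex_series_dirichlet c s : 1 < s -> c 0%nat = 0 -> (forall n, Rabs (c n) <= 1) ->
  ex_series (dirichlet c s).
Proof.
  intros Hs H0 Hb.
  exact (ex_series_Rabs_le _ _ (fun n => Rabs_dirichlet_le c s n H0 Hb) (ex_series_zeta_term s Hs)).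
Qed.

Definition euler_partial (c : nat -> R) (s : R) (N : nat) : R :=
  prod_primes (fun p => / (1 - dirichlet c s p)) N.

Lemma is_lim_euler_partial c s : 1 < s -> bounded_multiplicative c ->
  is_lim_seq (euler_partial c s) (Lfun c s).
Proof.
  intros Hs (Hm & H1 & H0 & Hb). apply (euler_product _ (zeta_term s)).
  - intros m n. unfold dirichlet. rewrite Hm.
    destruct m as [|m]; [rewrite H0; ring|]. destruct n as [|n]; [rewrite Nat.mul_0_r, H0; ring|].
    rewrite mult_INR, <- Rpower_mult_distr by (apply lt_0_INR; lia). ring.
  - unfold dirichlet. rewrite H1, Rpower_1_l. ring.
  - unfold dirichlet. rewrite H0. ring.
  - intros n. apply Rabs_dirichlet_le; assumption.
  - apply ex_series_zeta_term, Hs.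
  - intros p Hp Hc.
    assert (Hlt : Rabs (dirichlet c s p) < 1).
    { apply prime_nat_ge_2 in Hp.
      eapply Rle_lt_trans; [apply Rabs_dirichlet_le; assumption|].
      unfold zeta_term. destruct (Nat.eqb_spec p 0); [lra|].
      apply Rpower_opp_lt_1; [apply (lt_INR 1) | ]; lia || lra. }
    rewrite Hc, Rabs_R1 in Hlt. lra.
Qed.

(** * The factorization at [s > 1] *)

Lemma prod_primes_mult a b N : prod_primes (fun p => a p * b p) N = prod_primes a N * prod_primes b N.
Proof. induction N as [|N IH]; simpl; [ring|]. rewrite IH. destruct primeb; ring. Qed.

Lemma prod_primes_pow a k N : prod_primes (fun p => a p ^ k) N = prod_primes a N ^ k.
Proof.
  induction N as [|N IH]; simpl; [rewrite pow1; ring|].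
  rewrite IH, Rpow_mult_distr. destruct primeb; [|rewrite pow1]; ring.
Qed.

Lemma prod_primes_ext a b N : (forall p, primeb p = true -> a p = b p) ->
  prod_primes a N = prod_primes b N.
Proof.
  intros H. induction N as [|N IH]; simpl; [reflexivity|].
  rewrite IH. destruct primeb eqn:E; [rewrite H|]; auto.
Qed.

Lemma prod_primes_ge_0 a N : (forall p, primeb p = true -> 0 <= a p) -> 0 <= prod_primes a N.
Proof.
  intros H. induction N as [|N IH]; simpl; [lra|].
  destruct primeb eqn:E; apply Rmult_le_pos; auto; lra.
Qed.

Lemma prod_primes_le a b N : (forall p, primeb p = true -> 0 <= a p <= b p) ->
  prod_primes a N <= prod_primes b N.
Proof.
  intros H. induction N as [|N IH]; simpl; [lra|].
  assert (0 <= prod_primes a N) by (apply prod_primes_ge_0; intros; apply H; auto).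
  destruct primeb eqn:E; [|lra]. apply Rmult_le_compat; auto; apply H, E.
Qed.

Lemma prod_p5_prod_primes f N :
  prod_p5 f N = prod_primes (fun p => if Nat.eqb (p mod 8) 5 then f p else 1) N.
Proof.
  induction N as [|N IH]; simpl; [reflexivity|].
  rewrite IH. unfold prime5mod8, primeb. destruct prime_dec; reflexivity.
Qed.

Lemma prime5mod8_spec p : prime5mod8 p = true <-> primeb p = true /\ Nat.eqb (p mod 8) 5 = true.
Proof. unfold prime5mod8, primeb. destruct prime_dec; intuition discriminate. Qed.

Lemma prime5mod8_ge_2 p : prime5mod8 p = true -> (2 <= p)%nat.
Proof. intros H. apply primeb_ge_2, prime5mod8_spec, H. Qed.

Lemma prod_p5_ext f g N : (forall p, prime5mod8 p = true -> f p = g p) -> prod_p5 f N = prod_p5 g N.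
Proof.
  intros H. induction N as [|N IH]; simpl; [reflexivity|].
  rewrite IH. destruct prime5mod8 eqn:E; [rewrite H|]; auto.
Qed.

Lemma prod_p5_ge_0 f N : (forall p, prime5mod8 p = true -> 0 <= f p) -> 0 <= prod_p5 f N.
Proof.
  intros H. induction N as [|N IH]; simpl; [lra|].
  destruct prime5mod8 eqn:E; apply Rmult_le_pos; auto; lra.
Qed.

Lemma prod_p5_le f g N : (forall p, prime5mod8 p = true -> 0 <= f p <= g p) ->
  prod_p5 f N <= prod_p5 g N.
Proof.
  intros H. induction N as [|N IH]; simpl; [lra|].
  assert (0 <= prod_p5 f N) by (apply prod_p5_ge_0; intros; apply H; auto).
  destruct prime5mod8 eqn:E; [|lra]. apply Rmult_le_compat; auto; apply H, E.
Qed.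

Lemma prod_p5_le_S f N : (forall p, prime5mod8 p = true -> 1 <= f p) ->
  prod_p5 f N <= prod_p5 f (S N).
Proof.
  intros H. simpl.
  assert (0 <= prod_p5 f N) by (apply prod_p5_ge_0; intros p Hp; specialize (H p Hp); lra).
  destruct prime5mod8 eqn:E; [specialize (H N E); nra | lra].
Qed.

Lemma Rinv_one_sub_ge_1 y : 0 <= y < 1 -> 1 <= / (1 - y).
Proof.
  intros H. rewrite <- Rinv_1. apply Rinv_le_contravar; lra.
Qed.

Lemma Rpower_prime_bounds s p : 0 < s -> (2 <= p)%nat -> 0 < Rpower (INR p) (- s) < 1.
Proof.
  intros Hs Hp. split; [apply exp_pos|].
  apply Rpower_opp_lt_1; [apply (lt_INR 1); lia | exact Hs].
Qed.

Lemma euler_partial_chi0_le_S s N : 0 < s ->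
  euler_partial chi0 s N <= euler_partial chi0 s (S N).
Proof.
  intros Hs. unfold euler_partial. simpl.
  assert (Hge1 : forall p, primeb p = true -> 1 <= / (1 - dirichlet chi0 s p)).
  { intros p Hp. apply Rinv_one_sub_ge_1.
    pose proof (Rpower_prime_bounds s p Hs (primeb_ge_2 p Hp)).
    unfold dirichlet, chi0, chi8. case_mod8 p; lra. }
  assert (0 <= prod_primes (fun p => / (1 - dirichlet chi0 s p)) N)
    by (apply prod_primes_ge_0; intros p Hp; specialize (Hge1 p Hp); lra).
  destruct primeb eqn:E; [specialize (Hge1 N E); nra | lra].
Qed.

(** Over the primes [p = 5 (mod 8)] the factors [(1 - p^-s)^-k] are part of
    the Euler product of [chi0 ^ k], whose partial products increase to
    [Lfun chi0 s ^ k]. *)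
Lemma prod_p5_le_Lfun_chi0 f k s N : 1 < s ->
  (forall p, prime5mod8 p = true -> f p = (/ (1 - Rpower (INR p) (- s))) ^ k) ->
  prod_p5 f N <= Lfun chi0 s ^ k.
Proof.
  intros Hs Hf.
  apply Rle_trans with (euler_partial chi0 s N ^ k).
  - rewrite prod_p5_prod_primes. unfold euler_partial. rewrite <- prod_primes_pow. apply prod_primes_le.
    intros p Hp. pose proof (Rpower_prime_bounds s p ltac:(lra) (primeb_ge_2 p Hp)).
    destruct (Nat.eqb (p mod 8) 5) eqn:E.
    + rewrite Hf by (apply prime5mod8_spec; auto).
      apply Nat.eqb_eq in E. unfold dirichlet, chi0, chi8. rewrite E, Rmult_1_l.
      split; [apply pow_le, Rlt_le, Rinv_0_lt_compat; lra | lra].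
    + split; [lra|]. apply pow_R1_Rle, Rinv_one_sub_ge_1.
      unfold dirichlet, chi0, chi8. case_mod8 p; lra.
  - apply pow_incr. split.
    + apply prod_primes_ge_0. intros p Hp. apply Rlt_le, Rinv_0_lt_compat.
      pose proof (Rpower_prime_bounds s p ltac:(lra) (primeb_ge_2 p Hp)).
      unfold dirichlet, chi0, chi8. case_mod8 p; lra.
    + apply (is_lim_seq_incr_compare (euler_partial chi0 s)).
      * apply is_lim_euler_partial, chi0_bounded_multiplicative. exact Hs.
      * intros n. apply euler_partial_chi0_le_S. lra.
Qed.

Lemma ex_finite_lim_prod_p5 f k s : 1 < s ->
  (forall p, prime5mod8 p = true -> f p = (/ (1 - Rpower (INR p) (- s))) ^ k) ->
  ex_finite_lim_seq (prod_p5 f).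
Proof.
  intros Hs Hf. apply (ex_finite_lim_seq_incr _ (Lfun chi0 s ^ k)).
  - intros n. apply prod_p5_le_S. intros p Hp. rewrite Hf by exact Hp.
    apply pow_R1_Rle, Rinv_one_sub_ge_1.
    pose proof (Rpower_prime_bounds s p ltac:(lra) (prime5mod8_ge_2 p Hp)). lra.
  - intros n. exact (prod_p5_le_Lfun_chi0 f k s n Hs Hf).
Qed.

Definition sq_factor (s : R) (p : nat) : R := / (1 - Rpower (INR p) (- (2 * s))) ^ 2.

Definition euler_prod5 (s : R) : R := real (Lim_seq (prod_p5 (euler_factor s))).

Definition sq_prod5 (s : R) : R := real (Lim_seq (prod_p5 (sq_factor s))).

Lemma is_lim_euler_prod5 s : 1 < s -> is_lim_seq (prod_p5 (euler_factor s)) (euler_prod5 s).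
Proof.
  intros Hs. apply Lim_seq_correct'. apply (ex_finite_lim_prod_p5 _ 4 s Hs).
  intros p _. unfold euler_factor. symmetry; apply pow_inv.
Qed.

Lemma is_lim_sq_prod5 s : 1 <= s -> is_lim_seq (prod_p5 (sq_factor s)) (sq_prod5 s).
Proof.
  intros Hs. apply Lim_seq_correct'. apply (ex_finite_lim_prod_p5 _ 2 (2 * s)); [lra|].
  intros p _. unfold sq_factor. symmetry; apply pow_inv.
Qed.

Lemma euler_factor_identity s p : 0 < s -> primeb p = true ->
  (if Nat.eqb (p mod 8) 5 then euler_factor s p else 1) *
    (/ (1 - dirichlet chi_8 s p) * / (1 - dirichlet chi_m8 s p))
  = (/ (1 - dirichlet chi0 s p) * / (1 - dirichlet chi_m4 s p)) *
    (if Nat.eqb (p mod 8) 5 then sq_factor s p else 1).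
Proof.
  intros Hs Hp.
  pose proof (Rpower_prime_bounds s p Hs (primeb_ge_2 p Hp)) as Hx.
  assert (Hx2 : Rpower (INR p) (- (2 * s)) = Rpower (INR p) (- s) * Rpower (INR p) (- s)).
  { rewrite <- Rpower_plus. f_equal. ring. }
  unfold euler_factor, sq_factor, dirichlet, chi0, chi_m4, chi_8, chi_m8, chi8. rewrite Hx2.
  case_mod8 p; simpl; field; repeat split; nra.
Qed.

Lemma euler_partial_identity s N : 0 < s ->
  prod_p5 (euler_factor s) N * (euler_partial chi_8 s N * euler_partial chi_m8 s N)
  = (euler_partial chi0 s N * euler_partial chi_m4 s N) * prod_p5 (sq_factor s) N.
Proof.
  intros Hs. rewrite !prod_p5_prod_primes. unfold euler_partial. rewrite <- !prod_primes_mult.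
  apply prod_primes_ext. intros p Hp. apply euler_factor_identity; assumption.
Qed.

Lemma euler_prod5_identity s : 1 < s ->
  euler_prod5 s * (Lfun chi_8 s * Lfun chi_m8 s) = (Lfun chi0 s * Lfun chi_m4 s) * sq_prod5 s.
Proof.
  intros Hs.
  assert (HL : forall c, bounded_multiplicative c -> is_lim_seq (euler_partial c s) (Lfun c s))
    by (intros c Hc; apply is_lim_euler_partial; assumption).
  assert (H1 := is_lim_seq_mult' _ _ _ _ (is_lim_euler_prod5 s Hs)
     (is_lim_seq_mult' _ _ _ _ (HL _ chi_8_bounded_multiplicative) (HL _ chi_m8_bounded_multiplicative))).
  assert (H2 := is_lim_seq_mult' _ _ _ _
     (is_lim_seq_mult' _ _ _ _ (HL _ chi0_bounded_multiplicative) (HL _ chi_m4_bounded_multiplicative))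
     (is_lim_sq_prod5 s ltac:(lra))).
  eapply is_lim_seq_ext in H1; [|intros N; apply euler_partial_identity; lra].
  apply is_lim_seq_unique in H1. apply is_lim_seq_unique in H2.
  rewrite H1 in H2. injection H2. auto.
Qed.

(** * Behaviour of the [L]-functions as [s -> 1+] *)

Lemma filterlim_at_right_of_eps (f : R -> R) a l :
  (forall eps, 0 < eps -> exists delta, 0 < delta /\
     forall s, a < s < a + delta -> Rabs (f s - l) < eps) ->
  filterlim f (at_right a) (locally l).
Proof.
  intros H. apply filterlim_locally. intros eps.
  destruct (H eps (cond_pos eps)) as [d [Hd Hs]].
  exists (mkposreal d Hd). intros y Hy Hay. apply Hs.
  change (Rabs (y - a) < d) in Hy. apply Rabs_def2 in Hy. lra.
Qed.

Definition odd_term (s : R) (k : nat) : R := Rpower (INR (2 * k + 1)) (- s).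

Lemma chi0_double k : chi0 (2 * k) = 0.
Proof.
  unfold chi0, chi8. rewrite <- Nat.Div0.mul_mod_idemp_r. case_mod8 k; reflexivity.
Qed.

Lemma chi0_double_add_1 k : chi0 (2 * k + 1) = 1.
Proof.
  unfold chi0, chi8. rewrite <- Nat.Div0.add_mod_idemp_l, <- Nat.Div0.mul_mod_idemp_r.
  case_mod8 k; reflexivity.
Qed.

Lemma is_series_odd_term s : 1 < s -> is_series (odd_term s) (Lfun chi0 s).
Proof.
  intros Hs. destruct chi0_bounded_multiplicative as (_ & _ & H0 & Hb).
  eapply is_series_ext;
    [|exact (is_series_blocks _ 2 _ ltac:(lia) (Series_correct _ (ex_series_dirichlet _ s Hs H0 Hb)))].
  intros k. change (2 - 1)%nat with 1%nat. cbv beta.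
  rewrite sum_Sn_R, sum_O. unfold dirichlet, odd_term.
  rewrite Nat.add_0_r, chi0_double, chi0_double_add_1. simpl. ring.
Qed.

Lemma odd_term_telescope_bounds s k : 1 < s ->
  2 * (s - 1) * odd_term s (S k)
  <= Rpower (INR (2 * k + 1)) (1 - s) - Rpower (INR (2 * S k + 1)) (1 - s)
  <= 2 * (s - 1) * odd_term s k.
Proof.
  intros Hs.
  assert (Ha : 0 < INR (2 * k + 1)) by (apply lt_0_INR; lia).
  assert (Hab : INR (2 * k + 1) < INR (2 * S k + 1)) by (apply lt_INR; lia).
  pose proof (Rpower_opp_sub_bounds _ _ (s - 1) Ha Hab ltac:(lra)) as H.
  replace (INR (2 * S k + 1) - INR (2 * k + 1)) with 2 in H
    by (rewrite !plus_INR, !mult_INR, !S_INR; simpl; ring).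
  replace (- (s - 1) - 1) with (- s) in H by ring.
  replace (- (s - 1)) with (1 - s) in H by ring.
  unfold odd_term. lra.
Qed.

Lemma sum_odd_term_lower s K : 1 < s ->
  1 - Rpower (INR (2 * K + 3)) (1 - s) <= 2 * (s - 1) * sum_n (odd_term s) K.
Proof.
  intros Hs. induction K as [|K IH].
  - rewrite sum_O. pose proof (odd_term_telescope_bounds s 0 Hs) as H.
    change (2 * 0 + 3)%nat with (2 * 1 + 1)%nat. change (INR (2 * 0 + 1)) with 1 in H.
    rewrite Rpower_1_l in H. lra.
  - rewrite sum_Sn_R.
    pose proof (odd_term_telescope_bounds s (S K) Hs) as H.
    replace (2 * S K + 1)%nat with (2 * K + 3)%nat in H by lia.
    replace (2 * S (S K) + 1)%nat with (2 * S K + 3)%nat in H by lia.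
    lra.
Qed.

Lemma sum_odd_term_upper s K : 1 < s ->
  2 * (s - 1) * sum_n (odd_term s) K <= 2 * (s - 1) + 1 - Rpower (INR (2 * K + 1)) (1 - s).
Proof.
  intros Hs. induction K as [|K IH].
  - rewrite sum_O. unfold odd_term. simpl. rewrite !Rpower_1_l. lra.
  - rewrite sum_Sn_R.
    pose proof (odd_term_telescope_bounds s K Hs). lra.
Qed.

Lemma Rpower_opp_small u eps : 0 < u -> 0 < eps ->
  exists K : nat, Rpower (INR (2 * K + 3)) (- u) < eps.
Proof.
  intros Hu He. destruct (INR_unbounded (exp (/ (u * eps)))) as [K HK].
  exists K. set (x := INR (2 * K + 3)).
  assert (Hx : exp (/ (u * eps)) < x).
  { unfold x. rewrite plus_INR, mult_INR. simpl. pose proof (pos_INR K). lra. }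
  assert (Hl : / (u * eps) < ln x).
  { rewrite <- (ln_exp (/ (u * eps))). apply ln_increasing; [apply exp_pos | exact Hx]. }
  assert (Hul : / eps < u * ln x).
  { apply Rmult_lt_compat_l with (r := u) in Hl; [|lra].
    replace (u * / (u * eps)) with (/ eps) in Hl by (field; lra). exact Hl. }
  pose proof (exp_ineq1_le (u * ln x)).
  assert (0 < / eps) by (apply Rinv_0_lt_compat; lra).
  rewrite Rpower_Ropp. unfold Rpower.
  rewrite <- (Rinv_inv eps). apply Rinv_lt_contravar; [nra | lra].
Qed.

Lemma Lfun_chi0_bounds s : 1 < s -> 1 / 2 <= (s - 1) * Lfun chi0 s <= 1 / 2 + (s - 1).
Proof.
  intros Hs. assert (HL : is_lim_seq (sum_n (odd_term s)) (Lfun chi0 s)) by exact (is_series_odd_term s Hs).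
  split.
  - assert (Hinc : forall n, sum_n (odd_term s) n <= sum_n (odd_term s) (S n)).
    { intros n. rewrite sum_Sn_R.
      pose proof (exp_pos (- s * ln (INR (2 * S n + 1)))). unfold odd_term, Rpower. lra. }
    apply Rnot_lt_le. intros Hc.
    destruct (Rpower_opp_small (s - 1) (1 - 2 * ((s - 1) * Lfun chi0 s))) as [K HK]; [lra | lra |].
    replace (- (s - 1)) with (1 - s) in HK by ring.
    pose proof (sum_odd_term_lower s K Hs). pose proof (is_lim_seq_incr_compare _ _ HL Hinc K). nra.
  - assert (Hup : Rbar_le (Lfun chi0 s) ((2 * (s - 1) + 1) / (2 * (s - 1)))).
    { apply (is_lim_seq_le (sum_n (odd_term s)) (fun _ => (2 * (s - 1) + 1) / (2 * (s - 1))));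
        [|exact HL | apply is_lim_seq_const].
      intros n. pose proof (sum_odd_term_upper s n Hs).
      pose proof (exp_pos ((1 - s) * ln (INR (2 * n + 1)))). fold (Rpower (INR (2 * n + 1)) (1 - s)) in *.
      apply Rmult_le_reg_l with (2 * (s - 1)); [lra|].
      replace (2 * (s - 1) * ((2 * (s - 1) + 1) / (2 * (s - 1)))) with (2 * (s - 1) + 1) by (field; lra).
      lra. }
    simpl in Hup. apply Rmult_le_compat_l with (r := s - 1) in Hup; [|lra].
    replace ((s - 1) * ((2 * (s - 1) + 1) / (2 * (s - 1)))) with (1 / 2 + (s - 1)) in Hup by (field; lra).
    exact Hup.
Qed.

Lemma Lfun_chi0_residue : filterlim (fun s => (s - 1) * Lfun chi0 s) (at_right 1) (locally (1 / 2)).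
Proof.
  apply filterlim_at_right_of_eps. intros eps He. exists eps. split; [exact He|]. intros s Hs.
  pose proof (Lfun_chi0_bounds s ltac:(lra)). apply Rabs_def1; lra.
Qed.

Lemma Rabs_Series_sub_sum_n_le (a B : nat -> R) K :
  (forall k, Rabs (a k) <= B k) -> ex_series B ->
  Rabs (Series a - sum_n a K) <= Series B - sum_n B K.
Proof.
  intros HaB HB.
  rewrite (Series_incr_n a (S K)), (Series_incr_n B (S K)), !sum_n_Reals
    by (lia || exact HB || exact (ex_series_Rabs_le _ _ HaB HB)).
  simpl pred. ring_simplify (sum_f_R0 a K + Series (fun k => a (S K + k)%nat) - sum_f_R0 a K).
  ring_simplify (sum_f_R0 B K + Series (fun k => B (S K + k)%nat) - sum_f_R0 B K).
  apply Rabs_Series_le; [intros k; apply HaB | now apply ex_series_incr_n].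
Qed.

Lemma continuous_sum_n (u : R -> nat -> R) x K :
  (forall k, continuous (fun s => u s k) x) -> continuous (fun s => sum_n (u s) K) x.
Proof.
  intros Hu. induction K as [|K IH].
  - apply (continuous_ext (fun s => u s 0%nat)); [intros s; symmetry; apply sum_O | apply Hu].
  - apply (continuous_ext (fun s => plus (sum_n (u s) K) (u s (S K)))).
    + intros s. symmetry. apply sum_Sn.
    + apply (continuous_plus (V := R_NormedModule)); [exact IH | apply Hu].
Qed.

Lemma filterlim_Series_at_right (u : R -> nat -> R) (B : nat -> R) a :
  (forall k, continuous (fun s => u s k) a) ->
  (forall s k, a <= s <= a + 1 -> Rabs (u s k) <= B k) -> ex_series B ->
  filterlim (fun s => Series (u s)) (at_right a) (locally (Series (u a))).
Proof.
  intros Hc Hdom HB. apply filterlim_at_right_of_eps. intros eps He.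
  assert (Htail : is_lim_seq (fun K => Series B - sum_n B K) 0).
  { replace (Finite 0) with (Rbar_minus (Series B) (Series B)) by (simpl; f_equal; ring).
    apply is_lim_seq_minus'; [apply is_lim_seq_const | apply (Series_correct _ HB)]. }
  apply is_lim_seq_spec in Htail. destruct (Htail (mkposreal (eps / 3) ltac:(lra))) as [K HK].
  specialize (HK K (le_n K)). simpl in HK. rewrite Rminus_0_r in HK.
  assert (Hsum := proj2 (continuity_pt_filterlim _ _) (continuous_sum_n u a K Hc)).
  destruct (Hsum (eps / 3) ltac:(lra)) as [d [Hd Hsd]].
  exists (Rmin d 1). split; [apply Rmin_pos; lra|]. intros s Hs.
  pose proof (Rmin_l d 1). pose proof (Rmin_r d 1).
  assert (Hpart : Rabs (sum_n (u s) K - sum_n (u a) K) < eps / 3).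
  { apply (Hsd s). split; [split; [exact I | lra]|]. unfold R_dist. apply Rabs_def1; lra. }
  assert (Hs1 : a <= s <= a + 1) by lra. assert (Ha1 : a <= a <= a + 1) by lra.
  pose proof (Rabs_Series_sub_sum_n_le (u s) B K (fun k => Hdom s k Hs1) HB) as T1.
  pose proof (Rabs_Series_sub_sum_n_le (u a) B K (fun k => Hdom a k Ha1) HB) as T2.
  pose proof (Rabs_pos (Series (u a) - sum_n (u a) K)).
  apply Rabs_def2 in Hpart. apply Rabs_le_between' in T1. apply Rabs_le_between' in T2.
  rewrite Rabs_pos_eq in HK by lra. apply Rabs_def1; lra.
Qed.

Definition block8 (a1 a3 a5 a7 s : R) (k : nat) : R :=
  a1 * Rpower (INR (8 * k + 1)) (- s) + a3 * Rpower (INR (8 * k + 3)) (- s) +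
  a5 * Rpower (INR (8 * k + 5)) (- s) + a7 * Rpower (INR (8 * k + 7)) (- s).

Lemma Rabs_chi8_le a1 a3 a5 a7 n :
  Rabs a1 <= 1 -> Rabs a3 <= 1 -> Rabs a5 <= 1 -> Rabs a7 <= 1 -> Rabs (chi8 a1 a3 a5 a7 n) <= 1.
Proof. intros. unfold chi8. case_mod8 n; auto; rewrite Rabs_R0; lra. Qed.

Lemma is_series_block8 a1 a3 a5 a7 s : 1 < s ->
  Rabs a1 <= 1 -> Rabs a3 <= 1 -> Rabs a5 <= 1 -> Rabs a7 <= 1 ->
  is_series (block8 a1 a3 a5 a7 s) (Lfun (chi8 a1 a3 a5 a7) s).
Proof.
  intros Hs H1 H3 H5 H7.
  assert (Hex : ex_series (dirichlet (chi8 a1 a3 a5 a7) s))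
    by (apply ex_series_dirichlet; [exact Hs | reflexivity | intros n; apply Rabs_chi8_le; assumption]).
  eapply is_series_ext; [|exact (is_series_blocks _ 8 _ ltac:(lia) (Series_correct _ Hex))].
  intros k. change (8 - 1)%nat with 7%nat. cbv beta.
  rewrite !sum_Sn_R, sum_O. unfold dirichlet, chi8, block8.
  assert (Hmod : forall r, (r < 8)%nat -> ((8 * k + r) mod 8 = r)%nat).
  { intros r Hr. rewrite Nat.add_comm, Nat.mul_comm, Nat.Div0.mod_add. apply Nat.mod_small, Hr. }
  rewrite !Hmod by lia. simpl. ring.
Qed.

Lemma continuous_block8 a1 a3 a5 a7 k x : continuous (fun s => block8 a1 a3 a5 a7 s k) x.
Proof.
  apply (ex_derive_continuous (V := R_NormedModule)). unfold block8, Rpower. auto_derive. auto.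
Qed.

Lemma Rpower_opp_sub_le s k r : 1 <= s <= 2 -> (1 < r)%nat ->
  0 <= Rpower (INR (8 * k + 1)) (- s) - Rpower (INR (8 * k + r)) (- s)
    <= 2 * INR (r - 1) * zeta_term 2 (S k).
Proof.
  intros Hs Hr.
  assert (Ha : 0 < INR (8 * k + 1)) by (apply lt_0_INR; lia).
  assert (Hab : INR (8 * k + 1) < INR (8 * k + r)) by (apply lt_INR; lia).
  destruct (Rpower_opp_sub_bounds _ _ s Ha Hab ltac:(lra)) as [Hlo Hhi].
  replace (INR (8 * k + r) - INR (8 * k + 1)) with (INR (r - 1)) in Hlo, Hhi
    by (rewrite <- minus_INR by lia; f_equal; lia).
  assert (Hpow : Rpower (INR (8 * k + 1)) (- s - 1) <= zeta_term 2 (S k)).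
  { unfold zeta_term. simpl Nat.eqb. cbv iota.
    eapply Rle_trans; [apply (Rle_Rpower _ _ (-2)); [apply (le_INR 1); lia | lra]|].
    apply Rpower_opp_le_base; [apply lt_0_INR; lia | apply le_INR; lia | lra]. }
  pose proof (exp_pos ((- s - 1) * ln (INR (8 * k + r)))).
  pose proof (exp_pos ((- s - 1) * ln (INR (8 * k + 1)))).
  fold (Rpower (INR (8 * k + r)) (- s - 1)) (Rpower (INR (8 * k + 1)) (- s - 1)) in *.
  pose proof (pos_INR (r - 1)).
  split.
  - eapply Rle_trans; [|exact Hlo]. apply Rmult_le_pos; [apply Rmult_le_pos|]; lra.
  - eapply Rle_trans; [exact Hhi|]. apply Rmult_le_compat; try nra.
Qed.

(** For a character with [a1 + a3 + a5 + a7 = 0] each block is a combination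
    of differences [(8k+1)^-s - (8k+r)^-s], hence is [O(1/k^2)] uniformly in
    [s] near [1]. *)
Lemma Rabs_block8_le a1 a3 a5 a7 s k : 1 <= s <= 2 -> a1 + a3 + a5 + a7 = 0 ->
  Rabs a3 <= 1 -> Rabs a5 <= 1 -> Rabs a7 <= 1 ->
  Rabs (block8 a1 a3 a5 a7 s k) <= 24 * zeta_term 2 (S k).
Proof.
  intros Hs Hsum H3 H5 H7.
  pose proof (Rpower_opp_sub_le s k 3 Hs ltac:(lia)) as D3.
  pose proof (Rpower_opp_sub_le s k 5 Hs ltac:(lia)) as D5.
  pose proof (Rpower_opp_sub_le s k 7 Hs ltac:(lia)) as D7.
  replace (INR (3 - 1)) with 2 in D3 by (simpl; ring).
  replace (INR (5 - 1)) with 4 in D5 by (simpl; ring).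
  replace (INR (7 - 1)) with 6 in D7 by (simpl; ring).
  set (x1 := Rpower (INR (8 * k + 1)) (- s)) in *.
  set (X3 := x1 - Rpower (INR (8 * k + 3)) (- s)) in *.
  set (X5 := x1 - Rpower (INR (8 * k + 5)) (- s)) in *.
  set (X7 := x1 - Rpower (INR (8 * k + 7)) (- s)) in *.
  replace (block8 a1 a3 a5 a7 s k) with (- (a3 * X3 + a5 * X5 + a7 * X7)).
  2:{ unfold block8, X3, X5, X7, x1. replace a1 with (- a3 - a5 - a7) by lra. ring. }
  apply Rabs_le_between in H3. apply Rabs_le_between in H5. apply Rabs_le_between in H7.
  apply Rabs_le. split; nra.
Qed.

Lemma filterlim_Lfun_chi8 a1 a3 a5 a7 V : a1 + a3 + a5 + a7 = 0 ->
  Rabs a1 <= 1 -> Rabs a3 <= 1 -> Rabs a5 <= 1 -> Rabs a7 <= 1 ->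
  is_series (block8 a1 a3 a5 a7 1) V ->
  filterlim (Lfun (chi8 a1 a3 a5 a7)) (at_right 1) (locally V).
Proof.
  intros Hsum H1 H3 H5 H7 HV.
  assert (HB : ex_series (fun k => 24 * zeta_term 2 (S k))).
  { apply (ex_series_scal_l (V := R_NormedModule) 24 (fun k => zeta_term 2 (S k))).
    apply (ex_series_incr_1 (zeta_term 2)), ex_series_zeta_term. lra. }
  assert (HL := filterlim_Series_at_right (block8 a1 a3 a5 a7) _ 1 (fun k => continuous_block8 a1 a3 a5 a7 k 1)
    (fun s k Hs => Rabs_block8_le a1 a3 a5 a7 s k Hs Hsum H3 H5 H7) HB).
  rewrite (is_series_unique _ _ HV) in HL.
  refine (filterlim_ext_loc _ _ _ HL). exists (mkposreal 1 Rlt_0_1). intros y _ Hy.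
  apply is_series_unique, is_series_block8; assumption.
Qed.

(** * Values at [s = 1] *)

Definition antideriv_pow (m : nat) (x : R) : R := x ^ (S m) / INR (S m).

Lemma is_derive_antideriv_pow m x : is_derive (antideriv_pow m) x (x ^ m).
Proof.
  unfold antideriv_pow. auto_derive; [trivial|].
  change (match m with 0%nat => 1 | S _ => INR m + 1 end) with (INR (S m)).
  field. apply not_0_INR. lia.
Qed.

Lemma le_of_is_derive_ge_0 (h dh : R -> R) :
  (forall x, is_derive h x (dh x)) -> (forall x, 0 <= x <= 1 -> 0 <= dh x) -> h 0 <= h 1.
Proof.
  intros Hd Hp. destruct (MVT_gen h 0 1 dh) as [c [Hc E]].
  - intros x _. apply Hd.
  - intros x _. apply continuity_pt_filterlim, (ex_derive_continuous (V := R_NormedModule)).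
    exists (dh x). apply Hd.
  - rewrite Rmin_left, Rmax_right in Hc by lra. specialize (Hp c Hc). nra.
Qed.

Lemma Rabs_sub_le_of_is_derive (D E dD dE : R -> R) :
  (forall x, is_derive D x (dD x)) -> (forall x, is_derive E x (dE x)) ->
  (forall x, 0 <= x <= 1 -> Rabs (dD x) <= dE x) ->
  Rabs (D 1 - D 0) <= E 1 - E 0.
Proof.
  intros HD HE Hb.
  assert (Hplus := le_of_is_derive_ge_0 (fun x => E x + D x) (fun x => dE x + dD x)).
  assert (Hminus := le_of_is_derive_ge_0 (fun x => E x - D x) (fun x => dE x - dD x)).
  apply Rabs_le. split.
  - enough (E 0 + D 0 <= E 1 + D 1) by lra. apply Hplus.
    + intros x. apply (is_derive_plus (V := R_NormedModule)); [apply HE | apply HD].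
    + intros x Hx. specialize (Hb x Hx). apply Rabs_le_between in Hb. lra.
  - enough (E 0 - D 0 <= E 1 - D 1) by lra. apply Hminus.
    + intros x. apply (is_derive_minus (V := R_NormedModule)); [apply HE | apply HD].
    + intros x Hx. specialize (Hb x Hx). apply Rabs_le_between in Hb. lra.
Qed.

Section ValueAtOne.

Variables a1 a3 a5 a7 : R.

Definition block8_antideriv (x : R) (k : nat) : R :=
  a1 * antideriv_pow (8 * k) x + a3 * antideriv_pow (8 * k + 2) x +
  a5 * antideriv_pow (8 * k + 4) x + a7 * antideriv_pow (8 * k + 6) x.

Definition block8_integrand (x : R) (k : nat) : R :=
  a1 * x ^ (8 * k) + a3 * x ^ (8 * k + 2) + a5 * x ^ (8 * k + 4) + a7 * x ^ (8 * k + 6).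

Lemma is_derive_sum_block8_antideriv K x :
  is_derive (fun y => sum_n (block8_antideriv y) K) x (sum_n (block8_integrand x) K).
Proof.
  assert (Hk : forall k, is_derive (fun y => block8_antideriv y k) x (block8_integrand x k)).
  { intros k. unfold block8_antideriv, block8_integrand.
    repeat apply (is_derive_plus (V := R_NormedModule));
      apply is_derive_scal, is_derive_antideriv_pow. }
  induction K as [|K IH].
  - rewrite sum_O. apply (is_derive_ext (fun y => block8_antideriv y 0)).
    + intros t. symmetry. apply sum_O.
    + apply Hk.
  - rewrite sum_Sn.
    apply (is_derive_ext (fun y => plus (sum_n (block8_antideriv y) K) (block8_antideriv y (S K)))).
    + intros t. symmetry. apply sum_Sn.
    + apply (is_derive_plus (V := R_NormedModule)); [exact IH | apply Hk].
Qed.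

Lemma block8_antideriv_1 k : block8_antideriv 1 k = block8 a1 a3 a5 a7 1 k.
Proof.
  unfold block8_antideriv, block8, antideriv_pow. rewrite !pow1.
  rewrite !Rpower_Ropp, !Rpower_1 by (apply lt_0_INR; lia).
  replace (S (8 * k)) with (8 * k + 1)%nat by lia.
  replace (S (8 * k + 2)) with (8 * k + 3)%nat by lia.
  replace (S (8 * k + 4)) with (8 * k + 5)%nat by lia.
  replace (S (8 * k + 6)) with (8 * k + 7)%nat by lia.
  unfold Rdiv. ring.
Qed.

Lemma block8_antideriv_0 k : block8_antideriv 0 k = 0.
Proof. unfold block8_antideriv, antideriv_pow. simpl pow. unfold Rdiv. ring. Qed.

Lemma sum_block8_integrand (Rx x : R) K : Rx * (1 - x ^ 8) = a1 + a3 * x ^ 2 + a5 * x ^ 4 + a7 * x ^ 6 ->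
  sum_n (block8_integrand x) K = Rx * (1 - x ^ (8 * K + 8)) :> R.
Proof.
  intros H. induction K as [|K IH].
  - rewrite sum_O. unfold block8_integrand. simpl Nat.mul. simpl Nat.add.
    rewrite H. simpl. ring.
  - rewrite sum_Sn_R, IH. unfold block8_integrand.
    replace (8 * S K)%nat with (8 * K + 8)%nat by lia.
    replace (8 * S K + 8)%nat with (8 * K + 8 + 8)%nat by lia.
    rewrite !pow_add.
    replace (Rx * (1 - x ^ (8 * K) * x ^ 8 * x ^ 8)) with
      (Rx * (1 - x ^ (8 * K) * x ^ 8) + x ^ (8 * K) * x ^ 8 * (Rx * (1 - x ^ 8))) by ring.
    rewrite H. ring.
Qed.

Variables (Rf A : R -> R).
Hypothesis A_derive : forall x, is_derive A x (Rf x).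
Hypothesis Rf_poly : forall x, Rf x * (1 - x ^ 8) = a1 + a3 * x ^ 2 + a5 * x ^ 4 + a7 * x ^ 6.
Hypothesis Rf_bound : forall x, 0 <= x <= 1 -> Rabs (Rf x) <= 2.

(** The error of the [K]-th partial sum is [int_0^1 Rf(x) x^(8K+8) dx]. *)
Lemma Rabs_sum_block8_sub_le K :
  Rabs (sum_n (block8 a1 a3 a5 a7 1) K - (A 1 - A 0)) <= 2 / INR (S (8 * K + 8)).
Proof.
  set (D := fun x => sum_n (block8_antideriv x) K - A x).
  assert (HD : forall x, is_derive D x (- (Rf x * x ^ (8 * K + 8)))).
  { intros x. replace (- (Rf x * x ^ (8 * K + 8))) with
      (sum_n (block8_integrand x) K - Rf x) by (rewrite (sum_block8_integrand (Rf x)) by apply Rf_poly; ring).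
    apply (is_derive_minus (V := R_NormedModule)); [apply is_derive_sum_block8_antideriv | apply A_derive]. }
  assert (HE : forall x, is_derive (fun y => 2 * antideriv_pow (8 * K + 8) y) x (2 * x ^ (8 * K + 8)))
    by (intros x; apply is_derive_scal, is_derive_antideriv_pow).
  pose proof (Rabs_sub_le_of_is_derive D _ _ _ HD HE) as Hle.
  unfold D in Hle. rewrite (sum_n_ext _ _ K block8_antideriv_1) in Hle.
  rewrite (sum_n_ext _ _ K block8_antideriv_0), sum_n_const, Rmult_0_r in Hle.
  unfold antideriv_pow in Hle. rewrite pow1, pow_i in Hle by lia.
  lapply Hle.
  - intros Hle'. eapply Rle_trans; [|eapply Rle_trans; [exact Hle'|right; unfold Rdiv; ring]].
    right. f_equal. ring.
  - intros x Hx. rewrite Rabs_Ropp, Rabs_mult, (Rabs_pos_eq (x ^ _)) by (apply pow_le; lra).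
    apply Rmult_le_compat_r; [apply pow_le; lra | apply Rf_bound, Hx].
Qed.

Lemma is_series_block8_1 : is_series (block8 a1 a3 a5 a7 1) (A 1 - A 0).
Proof.
  change (is_lim_seq (sum_n (block8 a1 a3 a5 a7 1)) (A 1 - A 0)).
  apply is_lim_seq_spec. intros eps.
  destruct (INR_unbounded (2 / eps)) as [N HN]. exists N. intros K HK.
  eapply Rle_lt_trans; [apply Rabs_sum_block8_sub_le|].
  assert (INR N <= INR (S (8 * K + 8))) by (apply le_INR; lia).
  pose proof (cond_pos eps).
  assert (0 < 2 / eps) by (apply Rdiv_lt_0_compat; lra).
  apply Rmult_lt_reg_r with (INR (S (8 * K + 8)) / eps); [apply Rdiv_lt_0_compat; lra|].
  replace (2 / INR (S (8 * K + 8)) * (INR (S (8 * K + 8)) / eps)) with (2 / eps) by (field; lra).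
  replace (eps * (INR (S (8 * K + 8)) / eps)) with (INR (S (8 * K + 8))) by (field; lra).
  lra.
Qed.

End ValueAtOne.

Lemma sqrt2_sq : sqrt 2 * sqrt 2 = 2.
Proof. apply sqrt_sqrt. lra. Qed.

Lemma sqrt2_bounds : 1 < sqrt 2 < 2.
Proof. pose proof sqrt2_sq. pose proof Rlt_sqrt2_0. split; nra. Qed.

Lemma x4_plus_1_factor x : (x ^ 2 + sqrt 2 * x + 1) * (x ^ 2 - sqrt 2 * x + 1) = 1 + x ^ 4.
Proof.
  replace (1 + x ^ 4) with (x ^ 4 + 2 * x ^ 2 + 1 - (sqrt 2 * sqrt 2) * x ^ 2) by (rewrite sqrt2_sq; ring).
  ring.
Qed.

Lemma x4_plus_1_factor_pos x : 0 < x ^ 2 + sqrt 2 * x + 1 /\ 0 < x ^ 2 - sqrt 2 * x + 1.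
Proof. pose proof sqrt2_sq. split; nra. Qed.

Lemma is_series_block8_chi_m4 : is_series (block8 1 (-1) 1 (-1) 1) (PI / 4).
Proof.
  replace (PI / 4) with (atan 1 - atan 0) by (rewrite atan_1, atan_0; ring).
  apply (is_series_block8_1 _ _ _ _ (fun x => / (1 + x ^ 2))).
  - intros x. auto_derive; auto. field. nra.
  - intros x. field. nra.
  - intros x Hx. rewrite Rabs_pos_eq by (left; apply Rinv_0_lt_compat; nra).
    apply Rle_trans with 1; [|lra]. rewrite <- Rinv_1. apply Rinv_le_contravar; nra.
Qed.

Lemma is_series_block8_chi_m8 : is_series (block8 1 1 (-1) (-1) 1) (PI / (2 * sqrt 2)).
Proof.
  pose proof sqrt2_sq. pose proof sqrt2_bounds.
  set (A := fun x => (atan (sqrt 2 * x + 1) + atan (sqrt 2 * x - 1)) / sqrt 2).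
  replace (PI / (2 * sqrt 2)) with (A 1 - A 0).
  2:{ unfold A. rewrite !Rmult_1_r, Rmult_0_r, Rplus_0_l.
      replace (0 - 1) with (Ropp 1) by ring. rewrite atan_opp.
      replace (sqrt 2 - 1) with (/ (sqrt 2 + 1)) by (field_simplify_eq; nra).
      rewrite atan_inv by lra. field. lra. }
  apply (is_series_block8_1 _ _ _ _ (fun x => (1 + x ^ 2) / (1 + x ^ 4)) A).
  - intros x. unfold A. destruct (x4_plus_1_factor_pos x). auto_derive; auto.
    replace (1 + (sqrt 2 * x + 1) * ((sqrt 2 * x + 1) * 1)) with (2 * (x ^ 2 + sqrt 2 * x + 1)).
    2:{ replace (2 * (x ^ 2 + sqrt 2 * x + 1)) with ((sqrt 2 * sqrt 2) * x ^ 2 + 2 * sqrt 2 * x + 2)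
          by (rewrite sqrt2_sq; ring). ring. }
    replace (1 + (sqrt 2 * x + - (1)) * ((sqrt 2 * x + - (1)) * 1)) with (2 * (x ^ 2 - sqrt 2 * x + 1)).
    2:{ replace (2 * (x ^ 2 - sqrt 2 * x + 1)) with ((sqrt 2 * sqrt 2) * x ^ 2 - 2 * sqrt 2 * x + 2)
          by (rewrite sqrt2_sq; ring). ring. }
    rewrite <- x4_plus_1_factor. field. lra.
  - intros x. field. nra.
  - intros x Hx. rewrite Rabs_pos_eq by (apply Rdiv_le_0_compat; nra).
    apply Rmult_le_reg_r with (1 + x ^ 4); [nra|].
    unfold Rdiv. rewrite Rmult_assoc, Rinv_l by nra. nra.
Qed.

Lemma is_series_block8_chi_8 : is_series (block8 1 (-1) (-1) 1 1) (ln (1 + sqrt 2) / sqrt 2).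
Proof.
  pose proof sqrt2_sq. pose proof sqrt2_bounds.
  set (A := fun x => (ln (x ^ 2 + sqrt 2 * x + 1) - ln (x ^ 2 - sqrt 2 * x + 1)) / (2 * sqrt 2)).
  replace (ln (1 + sqrt 2) / sqrt 2) with (A 1 - A 0).
  2:{ unfold A.
      replace (1 ^ 2 + sqrt 2 * 1 + 1) with ((1 + sqrt 2) ^ 2 * (1 ^ 2 - sqrt 2 * 1 + 1)).
      2:{ replace ((1 + sqrt 2) ^ 2 * (1 ^ 2 - sqrt 2 * 1 + 1))
            with (2 + 3 * sqrt 2 - sqrt 2 * (sqrt 2 * sqrt 2)) by ring.
          rewrite sqrt2_sq. ring. }
      replace (0 ^ 2 + sqrt 2 * 0 + 1) with 1 by ring. replace (0 ^ 2 - sqrt 2 * 0 + 1) with 1 by ring.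
      rewrite ln_mult, ln_pow by (try apply pow_lt; nra). rewrite ln_1. simpl INR. field. lra. }
  apply (is_series_block8_1 _ _ _ _ (fun x => (1 - x ^ 2) / (1 + x ^ 4)) A).
  - intros x. unfold A. destruct (x4_plus_1_factor_pos x).
    auto_derive; [repeat split; simpl; lra|].
    rewrite <- x4_plus_1_factor. simpl. field. repeat split; simpl in *; lra.
  - intros x. field. nra.
  - intros x Hx. apply Rabs_le.
    split; apply Rmult_le_reg_r with (1 + x ^ 4); try nra; unfold Rdiv;
      rewrite Rmult_assoc, Rinv_l by nra; nra.
Qed.

(** * The residue of [F] at [s = 1] *)

Lemma sq_factor_bounds s p : 1 <= s -> prime5mod8 p = true -> 1 <= sq_factor s p <= sq_factor 1 p.
Proof.
  intros Hs Hp. apply prime5mod8_ge_2 in Hp. unfold sq_factor.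
  pose proof (Rpower_prime_bounds (2 * s) p ltac:(lra) Hp).
  pose proof (Rpower_prime_bounds (2 * 1) p ltac:(lra) Hp).
  assert (Rpower (INR p) (- (2 * s)) <= Rpower (INR p) (- (2 * 1)))
    by (apply Rle_Rpower; [apply (le_INR 1); lia | lra]).
  rewrite <- !pow_inv. split.
  - apply pow_R1_Rle, Rinv_one_sub_ge_1. lra.
  - apply pow_incr. split; [left; apply Rinv_0_lt_compat; lra | apply Rinv_le_contravar; lra].
Qed.

Lemma continuous_prod_p5_sq_factor N x : 0 < x -> continuous (fun s => prod_p5 (sq_factor s) N) x.
Proof.
  intros Hx. apply (ex_derive_continuous (V := R_NormedModule)).
  induction N as [|N IH]; simpl; [apply ex_derive_const|].
  apply ex_derive_mult; [exact IH|]. destruct prime5mod8 eqn:E; [|apply ex_derive_const].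
  pose proof (Rpower_prime_bounds (2 * x) N ltac:(lra) (prime5mod8_ge_2 N E)) as Hb.
  unfold sq_factor. unfold Rpower in *. auto_derive.
  apply Rmult_integral_contrapositive. split; lra.
Qed.

(** Partial products increase in [N] and decrease in [s], so [sq_prod5] is
    squeezed between a continuous partial product and its value at [1]. *)
Lemma filterlim_sq_prod5 : filterlim sq_prod5 (at_right 1) (locally (sq_prod5 1)).
Proof.
  apply filterlim_at_right_of_eps. intros eps He.
  pose proof (is_lim_sq_prod5 1 ltac:(lra)) as HL. apply is_lim_seq_spec in HL.
  destruct (HL (mkposreal (eps / 2) ltac:(lra))) as [N HN].
  specialize (HN N (le_n N)). cbn [pos] in HN.
  assert (Hc := proj2 (continuity_pt_filterlim _ _) (continuous_prod_p5_sq_factor N 1 Rlt_0_1)).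
  destruct (Hc (eps / 2) ltac:(lra)) as [d [Hd Hsd]].
  exists d. split; [exact Hd|]. intros s Hs.
  assert (Hpart : Rabs (prod_p5 (sq_factor s) N - prod_p5 (sq_factor 1) N) < eps / 2).
  { apply (Hsd s). split; [split; [exact I | lra]|]. unfold R_dist. apply Rabs_def1; lra. }
  assert (Hmono : sq_prod5 s <= sq_prod5 1).
  { enough (H : Rbar_le (sq_prod5 s) (sq_prod5 1)) by exact H.
    apply (is_lim_seq_le (prod_p5 (sq_factor s)) (prod_p5 (sq_factor 1)));
      [|apply is_lim_sq_prod5; lra | apply is_lim_sq_prod5; lra].
    intros n. apply prod_p5_le. intros p Hp.
    pose proof (sq_factor_bounds s p ltac:(lra) Hp). lra. }
  assert (Hlow : prod_p5 (sq_factor s) N <= sq_prod5 s).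
  { apply (is_lim_seq_incr_compare _ _ (is_lim_sq_prod5 s ltac:(lra))).
    intros n. apply prod_p5_le_S. intros p Hp. apply (sq_factor_bounds s p ltac:(lra) Hp). }
  apply Rabs_def2 in Hpart. apply Rabs_def2 in HN. apply Rabs_def1; lra.
Qed.

Lemma prod_p5_const_factor N : prod_p5 const_factor N = prod_p5 (sq_factor 1) N.
Proof.
  apply prod_p5_ext. intros p Hp. apply prime5mod8_ge_2 in Hp. unfold const_factor, sq_factor.
  rewrite Rmult_1_r, Rpower_Ropp. replace 2 with (INR 2) at 1 by reflexivity.
  rewrite Rpower_pow by (apply lt_0_INR; lia). reflexivity.
Qed.

Lemma filterlim_Lfun_chi_m4 : filterlim (Lfun chi_m4) (at_right 1) (locally (PI / 4)).
Proof.
  apply filterlim_Lfun_chi8; rewrite ?Rabs_R1, ?Rabs_m1; lra || apply is_series_block8_chi_m4.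
Qed.

Lemma filterlim_Lfun_chi_8 : filterlim (Lfun chi_8) (at_right 1) (locally (ln (1 + sqrt 2) / sqrt 2)).
Proof.
  apply filterlim_Lfun_chi8; rewrite ?Rabs_R1, ?Rabs_m1; lra || apply is_series_block8_chi_8.
Qed.

Lemma filterlim_Lfun_chi_m8 : filterlim (Lfun chi_m8) (at_right 1) (locally (PI / (2 * sqrt 2))).
Proof.
  apply filterlim_Lfun_chi8; rewrite ?Rabs_R1, ?Rabs_m1; lra || apply is_series_block8_chi_m8.
Qed.

Lemma filterlim_Rmult {T} {F : (T -> Prop) -> Prop} {FF : Filter F} (f g : T -> R) a b :
  filterlim f F (locally a) -> filterlim g F (locally b) ->
  filterlim (fun x => f x * g x) F (locally (a * b)).
Proof.
  intros Hf Hg. eapply filterlim_comp_2; [exact Hf | exact Hg | apply (filterlim_mult a b)].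
Qed.

Lemma filterlim_Rinv {T} {F : (T -> Prop) -> Prop} {FF : Filter F} (f : T -> R) a :
  filterlim f F (locally a) -> a <> 0 -> filterlim (fun x => / f x) F (locally (/ a)).
Proof.
  intros Hf Ha. eapply filterlim_comp; [exact Hf|].
  apply (filterlim_Rbar_inv (Finite a)). intros E. injection E. exact Ha.
Qed.

(** By [euler_prod5_identity],
    [(s - 1) F(s) = (s - 1) L(s, chi0) L(s, chi_m4) P(s) / (L(s, chi_8) L(s, chi_m8))],
    and the right-hand side tends to
    [(1/2) (PI/4) P(1) / ((ln (1 + sqrt 2) / sqrt 2) (PI / (2 sqrt 2)))]. *)
Lemma filterlim_residue_euler_prod5 :
  filterlim (fun s => (s - 1) * euler_prod5 s) (at_right 1)
    (locally (/ (2 * ln (1 + sqrt 2)) * sq_prod5 1)).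
Proof.
  pose proof sqrt2_sq. pose proof sqrt2_bounds. pose proof PI_RGT_0.
  assert (Hln : 0 < ln (1 + sqrt 2)) by (rewrite <- ln_1; apply ln_increasing; lra).
  set (D := ln (1 + sqrt 2) / sqrt 2 * (PI / (2 * sqrt 2))).
  assert (HD : 0 < D) by (unfold D; apply Rmult_lt_0_compat; apply Rdiv_lt_0_compat; lra).
  assert (Hden := filterlim_Rmult _ _ _ _ filterlim_Lfun_chi_8 filterlim_Lfun_chi_m8). fold D in Hden.
  assert (Hlim := filterlim_Rmult _ _ _ _
    (filterlim_Rmult _ _ _ _ (filterlim_Rmult _ _ _ _ Lfun_chi0_residue filterlim_Lfun_chi_m4)
                             filterlim_sq_prod5)
    (filterlim_Rinv _ _ Hden ltac:(lra))).
  assert (Hval : / (2 * ln (1 + sqrt 2)) * sq_prod5 1 = 1 / 2 * (PI / 4) * sq_prod5 1 * / D).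
  { unfold D. replace (ln (1 + sqrt 2) / sqrt 2 * (PI / (2 * sqrt 2)))
      with (ln (1 + sqrt 2) * PI / (2 * (sqrt 2 * sqrt 2))) by (field; lra).
    rewrite sqrt2_sq. field. lra. }
  rewrite Hval. refine (filterlim_ext_loc _ _ _ Hlim).
  assert (Hnear := proj1 (filterlim_locally _ _) Hden (mkposreal (D / 2) ltac:(lra))).
  assert (Hgt : at_right 1 (fun s => 1 < s)) by (exists (mkposreal 1 Rlt_0_1); intros; assumption).
  apply (filter_imp (fun s => 1 < s /\ ball D (D / 2) (Lfun chi_8 s * Lfun chi_m8 s))).
  - intros s [Hs Hb]. change (Rabs (Lfun chi_8 s * Lfun chi_m8 s - D) < D / 2) in Hb.
    apply Rabs_def2 in Hb.
    apply (Rmult_eq_reg_r (Lfun chi_8 s * Lfun chi_m8 s)); [|lra].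
    rewrite (Rmult_assoc (s - 1) (euler_prod5 s)), euler_prod5_identity by exact Hs.
    field. split; intros Hc; rewrite Hc in Hb; lra.
  - apply filter_and; assumption.
Qed.

Theorem mainTheorem5 :
  exists (F : R -> R) (C : R),
    (forall s : R, 1 < s ->
       is_lim_seq (fun N => prod_p5 (euler_factor s) N) (F s)) /\
    is_lim_seq (fun N => prod_p5 const_factor N) C /\
    filterlim (fun s => (s - 1) * F s) (at_right 1)
      (locally (/ (2 * ln (1 + sqrt 2)) * C)).
Proof.
  exists euler_prod5, (sq_prod5 1). split; [|split].
  - exact is_lim_euler_prod5.
  - eapply is_lim_seq_ext; [intros N; symmetry; apply prod_p5_const_factor|].
    apply is_lim_sq_prod5. lra.
  - exact filterlim_residue_euler_prod5.
Qed.
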